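(* Let $x\in\mathbf{Q}_2$, $v\in V$ with $vx=x$, and $\varphi\in\mathrm{Stab}_N(\mathbf{Q}_2)$. Then $(\varphi v\varphi^{-1})'(\varphi(x))=v'(x)$.
   Context: Cantor space $\mathfrak C=\{0,1\}^{\mathbf N}$; $C_m=\{m\cdot x\}$ for a finite word $m$. Thompson's group $V$: homeomorphisms $v$ of $\mathfrak C$ with $v(m_kx)=m'_kx$ for two partitions $\mathfrak C=\bigsqcup_k C_{m_k}=\bigsqcup_k C_{m'_k}$; slope $v'(x)=2^{|m_k|-|m'_k|}$ for $x\in C_{m_k}$. $\mathbf{Q}_2\subset\mathfrak C$ is the set of eventually-zero sequences. $\mathrm{Stab}_N(\mathbf{Q}_2)=\{\varphi\in\mathrm{Homeo}(\mathfrak C):\varphi V\varphi^{-1}=V,\ \varphi(\mathbf{Q}_2)=\mathbf{Q}_2\}$. *)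

From Stdlib Require Import Reals ClassicalEpsilon.
From mathcomp Require Import all_boot.
Set Implicit Arguments. Unset Strict Implicit. Unset Printing Implicit Defensive.

(* Cantor space {0,1}^N, with 0 = false, 1 = true. *)
Definition cantor := nat -> bool.

Definition cyl (m : seq bool) (x : cantor) : cantor :=
  fun i => if i < size m then nth false m i else x (i - size m).

Definition in_cyl (m : seq bool) (x : cantor) : Prop := exists y, x = cyl m y.

Definition ccontinuous (f : cantor -> cantor) : Prop :=
  forall (x : cantor) (n : nat), exists N : nat, forall y : cantor,
    (forall i, i < N -> y i = x i) -> forall i, i < n -> f y i = f x i.

Definition homeo_pair (f g : cantor -> cantor) : Prop :=
  cancel f g /\ cancel g f /\ ccontinuous f /\ ccontinuous g.

Definition is_homeo (f : cantor -> cantor) : Prop := exists g, homeo_pair f g.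

Definition is_partition (ms : seq (seq bool)) : Prop :=
  forall x : cantor, exists! k, k < size ms /\ in_cyl (nth [::] ms k) x.

Definition V_data (v : cantor -> cantor) (ms ms' : seq (seq bool)) : Prop :=
  size ms = size ms' /\ is_partition ms /\ is_partition ms' /\
  forall k, k < size ms -> forall y : cantor,
    v (cyl (nth [::] ms k) y) = cyl (nth [::] ms' k) y.

Definition in_V (v : cantor -> cantor) : Prop :=
  is_homeo v /\ exists ms ms', V_data v ms ms'.

(* Slope v'(x) = 2^(|m_k| - |m'_k|) for x in C_{m_k}, for partition data of v
   (chosen by Hilbert's epsilon; well-definedness is not presupposed). *)
Definition slope (v : cantor -> cantor) (x : cantor) : R :=
  epsilon (inhabits R0) (fun r : R => exists ms ms' k,
    V_data v ms ms' /\ k < size ms /\ in_cyl (nth [::] ms k) x /\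
    r = powerRZ (IZR 2) (Z.of_nat (size (nth [::] ms k)) - Z.of_nat (size (nth [::] ms' k)))%Z).

Definition Q2 (x : cantor) : Prop := exists N, forall n, N <= n -> x n = false.

Definition StabN_Q2 (phi psi : cantor -> cantor) : Prop :=
  homeo_pair phi psi /\
  (forall v, in_V v -> in_V (fun y => phi (v (psi y)))) /\
  (forall w, in_V w -> exists v, in_V v /\ w = (fun y => phi (v (psi y)))) /\
  (forall x, Q2 x -> Q2 (phi x)) /\
  (forall y, Q2 y -> exists x, Q2 x /\ phi x = y).

(* At a point z of Q2 fixed by v in V, v acts near z by replacing a prefix p of z by
   another prefix q of z, and v'(z) = 2^(|p| - |q|).  This exponent, the log-slope,
   determines the germ of v at z and is additive under composition.  Conjugation by phi
   carries germs at x to germs at phi(x), hence induces an additive map on log-slopes.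
   That map preserves positivity: iterating a germ of positive log-slope pushes points
   arbitrarily close to its fixed point a definite distance away, while a germ of
   non-positive log-slope leaves small neighbourhoods of its fixed point invariant, and
   phi is a homeomorphism.  Since every point of Q2 carries an element of V of log-slope 1,
   the map is multiplication by some j > 0, and applying the same argument to phi^-1
   gives k * j = 1, so j = 1. *)

From Stdlib Require Import Reals ClassicalEpsilon FunctionalExtensionality ZArith Lia.
From mathcomp Require Import all_boot zify.
Set Implicit Arguments. Unset Strict Implicit. Unset Printing Implicit Defensive.

Definition zero : cantor := fun _ => false.

Definition shiftn (n : nat) (x : cantor) : cantor := fun i => x (i + n).

Definition agree (n : nat) (x y : cantor) : Prop := forall i, i < n -> x i = y i.

Lemma cyl_cat u w y : cyl (u ++ w) y = cyl u (cyl w y).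
Proof.
apply: functional_extensionality => i; rewrite /cyl size_cat nth_cat.
case: (ltnP i (size u)) => hi; first by rewrite ltn_addr.
have -> : (i - size u < size w) = (i < size u + size w) by lia.
by case: ifP => // _; congr y; lia.
Qed.

Lemma cyl_cons b w y : cyl (b :: w) y = cyl [:: b] (cyl w y).
Proof. exact: (cyl_cat [:: b]). Qed.

Lemma cyl_nil y : cyl [::] y = y.
Proof. by apply: functional_extensionality => i; rewrite /cyl subn0. Qed.

Lemma cyl_tail m y j : cyl m y (size m + j) = y j.
Proof. by rewrite /cyl ltnNge leq_addr /= addKn. Qed.

Lemma shiftn_cyl m y : shiftn (size m) (cyl m y) = y.
Proof. by apply: functional_extensionality => i; rewrite /shiftn addnC cyl_tail. Qed.

Lemma cyl_head_shiftn x : x = cyl [:: x 0] (shiftn 1 x).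
Proof. by apply: functional_extensionality => -[|i] //; rewrite /cyl /shiftn /= subn1 addn1. Qed.

Lemma cyl_nseq_zero t : cyl (nseq t false) zero = zero.
Proof.
apply: functional_extensionality => i.
by rewrite /cyl size_nseq nth_nseq; case: ifP => // _; case: ifP.
Qed.

Lemma agree_le n N x y : n <= N -> agree N x y -> agree n x y.
Proof. by move=> hn h i hi; apply: h; apply: leq_trans hn. Qed.

Lemma agree_cyl m y w : agree (size m) (cyl m y) (cyl m w).
Proof. by move=> i hi; rewrite /cyl hi. Qed.

Lemma agree_cyl_shiftn m w x : agree (size m) x (cyl m w) -> x = cyl m (shiftn (size m) x).
Proof.
move=> h; apply: functional_extensionality => i; rewrite /cyl /shiftn.
case: ifP => hi; first by rewrite h // /cyl hi.
by rewrite subnK // leqNgt hi.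
Qed.

Lemma cyl_eq_size u w : (forall y, cyl u y = cyl w y) -> size u = size w.
Proof.
wlog lt_uw : u w / size u < size w.
  move=> W e; case: (ltngtP (size u) (size w)) => h //; first exact: W.
  by symmetry; apply: W => // y; rewrite e.
move=> /(_ (fun _ => ~~ nth false w (size u))) /(congr1 (fun f => f (size u))).
by rewrite /cyl ltnn lt_uw; case: (nth false w (size u)).
Qed.

Lemma cyl_zero_inj p q : cyl p zero = cyl q zero -> size p = size q -> p = q.
Proof.
move=> e hs; apply: (eq_from_nth (x0 := false) hs) => i hi.
by have := congr1 (fun z => z i) e; rewrite /cyl hi -hs hi.
Qed.

Lemma cyl_zero_pad p q : cyl p zero = cyl q zero -> size q <= size p ->
  p = q ++ nseq (size p - size q) false.
Proof.
move=> e hqp; apply: cyl_zero_inj; first by rewrite e cyl_cat cyl_nseq_zero.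
by rewrite size_cat size_nseq subnKC.
Qed.

Lemma Q2_cyl_zero z : Q2 z <-> exists s, z = cyl s zero.
Proof.
split => [[N hN] | [s ->]].
- exists (mkseq z N); apply: functional_extensionality => i.
  rewrite /cyl size_mkseq; case: ltnP => hi; first by rewrite nth_mkseq.
  exact: hN.
- by exists (size s) => n hn; rewrite /cyl ltnNge hn.
Qed.

Lemma Q2_cyl m w : Q2 (cyl m w) -> Q2 w.
Proof. by move=> [N hN]; exists N => n hn; rewrite -(cyl_tail m) hN //; lia. Qed.

Definition swaps_prefix (u : cantor -> cantor) (z : cantor) (p q : seq bool) : Prop :=
  [/\ z = cyl p zero, z = cyl q zero & forall y, u (cyl p y) = cyl q y].

Definition log_slope (u : cantor -> cantor) (z : cantor) (d : Z) : Prop :=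
  exists p q, swaps_prefix u z p q /\ d = (Z.of_nat (size p) - Z.of_nat (size q))%Z.

Definition germ_eq (u1 u2 : cantor -> cantor) (z : cantor) : Prop :=
  exists K, forall y, agree K y z -> u1 y = u2 y.

Lemma swaps_prefix_pad t u z p q : swaps_prefix u z p q ->
  swaps_prefix u z (p ++ nseq t false) (q ++ nseq t false).
Proof.
case=> hp hq hu; split; rewrite ?cyl_cat ?cyl_nseq_zero //.
by move=> y; rewrite !cyl_cat hu.
Qed.

Lemma log_slope_Q2 u z d : log_slope u z d -> Q2 z.
Proof. by move=> [p [q [[hp _ _] _]]]; apply/Q2_cyl_zero; exists p. Qed.

Lemma log_slope_fix u z d : log_slope u z d -> u z = z.
Proof. by move=> [p [q [[hp hq hu] _]]]; rewrite {1}hp hu -hq. Qed.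

Lemma log_slope_comp u w z d1 d2 :
  log_slope u z d1 -> log_slope w z d2 -> log_slope (w \o u) z (d1 + d2).
Proof.
move=> [p1 [q1 [h1 ->]]] [p2 [q2 [h2 ->]]].
have [hp1 hq1 hu1] := swaps_prefix_pad (size p2) h1.
have [hp2 hq2 hu2] := swaps_prefix_pad (size q1) h2.
have e : q1 ++ nseq (size p2) false = p2 ++ nseq (size q1) false.
  by apply: cyl_zero_inj; rewrite -?hq1 -?hp2 // !size_cat !size_nseq addnC.
exists (p1 ++ nseq (size p2) false), (q2 ++ nseq (size q1) false); split.
  by split => // y /=; rewrite hu1 e hu2.
rewrite !size_cat !size_nseq; lia.
Qed.

Lemma log_slope_iter n u z d : log_slope u z d -> log_slope (iter n u) z (Z.of_nat n * d).
Proof.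
move=> hu; elim: n => [|n IH].
  by case: hu => [p [q [[hp _ _] _]]]; exists p, p; split; [split | lia].
rewrite Nat2Z.inj_succ Z.mul_succ_l; exact: log_slope_comp IH hu.
Qed.

Lemma log_slope_inv u ui z d : log_slope u z d -> cancel u ui -> log_slope ui z (- d).
Proof.
move=> [p [q [[hp hq hu] ->]]] uK; exists q, p; split; last by lia.
by split => // y; rewrite -hu uK.
Qed.

Lemma log_slope_germ_eq u1 u2 z d :
  log_slope u1 z d -> log_slope u2 z d -> germ_eq u1 u2 z.
Proof.
move=> [p1 [q1 [h1 e1]]] [p2 [q2 [h2 e2]]].
have [hp1 hq1 hu1] := swaps_prefix_pad (size p2) h1.
have [hp2 hq2 hu2] := swaps_prefix_pad (size p1) h2.
have ep : p1 ++ nseq (size p2) false = p2 ++ nseq (size p1) false.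
  by apply: cyl_zero_inj; rewrite -?hp1 -?hp2 // !size_cat !size_nseq addnC.
have eq : q1 ++ nseq (size p2) false = q2 ++ nseq (size p1) false.
  apply: cyl_zero_inj; first by rewrite -hq1 -hq2.
  rewrite !size_cat !size_nseq; lia.
exists (size (p1 ++ nseq (size p2) false)) => y; rewrite {1}hp1.
by move/agree_cyl_shiftn => ->; rewrite hu1 ep hu2 eq.
Qed.

Lemma germ_eq_log_slope u1 u2 z d1 d2 :
  germ_eq u1 u2 z -> log_slope u1 z d1 -> log_slope u2 z d2 -> d1 = d2.
Proof.
move=> [K hK] [p1 [q1 [h1 ->]]] [p2 [q2 [h2 ->]]].
have [hp1 _ hu1] := swaps_prefix_pad (size p2 + K) h1.
have [hp2 _ hu2] := swaps_prefix_pad (size p1 + K) h2.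
have ep : p1 ++ nseq (size p2 + K) false = p2 ++ nseq (size p1 + K) false.
  apply: cyl_zero_inj; first by rewrite -hp1 -hp2.
  rewrite !size_cat !size_nseq; lia.
have : forall y, cyl (q1 ++ nseq (size p2 + K) false) y = cyl (q2 ++ nseq (size p1 + K) false) y.
  move=> y; rewrite -hu1 -hu2 -ep; apply: hK; rewrite hp1.
  apply: (agree_le _ (agree_cyl y zero)); rewrite size_cat size_nseq; lia.
move/cyl_eq_size; rewrite !size_cat !size_nseq; lia.
Qed.

Lemma log_slope_unique u z d1 d2 : log_slope u z d1 -> log_slope u z d2 -> d1 = d2.
Proof. by apply: germ_eq_log_slope; exists 0. Qed.

Definition conjugate (phi psi u : cantor -> cantor) : cantor -> cantor :=
  fun y => phi (u (psi y)).

Lemma germ_eq_conjugate phi psi u1 u2 z : cancel phi psi -> ccontinuous psi ->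
  germ_eq u1 u2 z -> germ_eq (conjugate phi psi u1) (conjugate phi psi u2) (phi z).
Proof.
move=> phiK cpsi [M hM]; have [N hN] := cpsi (phi z) M.
by exists N => y hy; rewrite /conjugate hM // -(phiK z); apply: hN.
Qed.

Lemma iter_conjugate n phi psi u : cancel phi psi -> cancel psi phi ->
  iter n (conjugate phi psi u) = conjugate phi psi (iter n u).
Proof.
move=> phiK psiK; apply: functional_extensionality => y.
by elim: n => [|n IH] /=; rewrite /conjugate ?psiK // IH /conjugate phiK.
Qed.

Lemma log_slope_expanding u z d : log_slope u z d -> (0 < d)%Z ->
  exists K, forall M, exists x n, agree M x z /\ iter n u x K <> z K.
Proof.
move=> [p [q [[hp hq hu] ed]]] d_gt0.
have ep := cyl_zero_pad (etrans (esym hp) hq) ltac:(lia).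
set a := size p - size q in ep.
have iter_u n y : iter n u (cyl (q ++ nseq (n * a) false) y) = cyl q y.
  elim: n y => [|n IH] y; first by rewrite cats0.
  by rewrite iterSr mulSn nseqD catA cyl_cat -ep hu -cyl_cat IH.
exists (size q) => M; set x := cyl (q ++ nseq (M * a) false) (cyl [:: true] zero).
exists x, M; split.
  rewrite hq -(cyl_nseq_zero (M * a)) -cyl_cat.
  by apply: (agree_le _ (agree_cyl _ zero)); rewrite size_cat size_nseq; nia.
by rewrite iter_u hq -[size q]addn0 !cyl_tail.
Qed.

Lemma log_slope_nonexpanding u z d : log_slope u z d -> (d <= 0)%Z ->
  exists N0, forall N, N0 <= N -> forall x, agree N x z -> agree N (u x) z.
Proof.
move=> [p [q [[hp hq hu] ed]]] d_le0.
have eq := cyl_zero_pad (etrans (esym hq) hp) ltac:(lia).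
exists (size p) => N hN x hx.
have -> : x = cyl p (shiftn (size p) x).
  by apply: (agree_cyl_shiftn (w := zero)); rewrite -hp; apply: agree_le hx.
rewrite hu eq cyl_cat => i hi; rewrite /cyl size_nseq nth_nseq /shiftn.
case: ifP => hip; first by rewrite hp /cyl hip.
case: ifP => hic; first by rewrite hp /cyl hip; case: ifP.
rewrite hx; last by lia.
by rewrite hp /cyl hip ifF //; lia.
Qed.

Lemma conjugate_log_slope_pos phi psi u z d f : homeo_pair phi psi ->
  log_slope u z d -> (0 < d)%Z -> log_slope (conjugate phi psi u) (phi z) f -> (0 < f)%Z.
Proof.
move=> [phiK [psiK [cphi cpsi]]] hu d_gt0 hf.
case: (Z.lt_ge_cases 0 f) => // f_le0; exfalso.
have [K hK] := log_slope_expanding hu d_gt0.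
have [N0 hN0] := log_slope_nonexpanding hf f_le0.
have [N1 hN1] := cpsi (phi z) K.+1.
have [M hM] := cphi z (maxn N0 N1).
have [x [n [hx xK]]] := hK M.
have hU : agree (maxn N0 N1) (iter n (conjugate phi psi u) (phi x)) (phi z).
  elim: n {xK} => [|n IH]; first exact: hM.
  by apply: hN0 => //; rewrite leq_maxl.
apply: xK; have := hN1 _ (agree_le (leq_maxr N0 N1) hU) K (ltnSn K).
by rewrite iter_conjugate // /conjugate !phiK.
Qed.

Lemma V_data_log_slope v ms ms' k z : V_data v ms ms' -> k < size ms ->
  in_cyl (nth [::] ms k) z -> v z = z -> Q2 z ->
  log_slope v z (Z.of_nat (size (nth [::] ms k)) - Z.of_nat (size (nth [::] ms' k))).
Proof.
move=> [_ [_ [_ hv]]] hk [w ez] vz hz.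
have [s ew] : exists s, w = cyl s zero by apply/Q2_cyl_zero/(Q2_cyl (m := nth [::] ms k)); rewrite -ez.
exists (nth [::] ms k ++ s), (nth [::] ms' k ++ s); split; last by rewrite !size_cat; lia.
split; last by move=> y; rewrite !cyl_cat hv.
- by rewrite ez ew cyl_cat.
- by rewrite -vz ez hv // ew cyl_cat.
Qed.

Lemma in_V_log_slope v z : in_V v -> v z = z -> Q2 z -> exists d, log_slope v z d.
Proof.
move=> [_ [ms [ms' hdata]]] vz hz; have [k [[hk hin] _]] := hdata.2.1 z.
by eexists; apply: V_data_log_slope hdata hk hin vz hz.
Qed.

Lemma slope_log_slope v z d : in_V v -> log_slope v z d -> slope v z = powerRZ (IZR 2) d.
Proof.
move=> [_ [ms [ms' hdata]]] hd; rewrite /slope; set P := fun r : R => _.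
have [ms1 [ms1' [k [hdata1 [hk [hin ->]]]]]] : P (epsilon (inhabits R0) P).
  apply: epsilon_spec; have [k [[hk hin] _]] := hdata.2.1 z.
  by eexists; exists ms, ms', k.
have [vz hz] := (log_slope_fix hd, log_slope_Q2 hd).
by congr powerRZ; apply: log_slope_unique (V_data_log_slope hdata1 hk hin vz hz) hd.
Qed.

Definition on_cyl1 (b : bool) (c : cantor -> cantor) (x : cantor) : cantor :=
  if x 0 == b then cyl [:: b] (c (shiftn 1 x)) else x.

Definition on_cyl (r : seq bool) (c : cantor -> cantor) : cantor -> cantor := foldr on_cyl1 c r.

Lemma on_cyl1_cyl b c y : on_cyl1 b c (cyl [:: b] y) = cyl [:: b] (c y).
Proof. by rewrite /on_cyl1 /= eqxx (shiftn_cyl [:: b]). Qed.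

Lemma on_cyl1_out b c x : x 0 != b -> on_cyl1 b c x = x.
Proof. by rewrite /on_cyl1 => /negbTE ->. Qed.

Lemma on_cyl1K b c c' : cancel c c' -> cancel (on_cyl1 b c) (on_cyl1 b c').
Proof.
move=> cK x; case: (eqVneq (x 0) b) => hx; last by rewrite !on_cyl1_out.
by rewrite (cyl_head_shiftn x) hx !on_cyl1_cyl cK.
Qed.

Lemma on_cyl1_continuous b c : ccontinuous c -> ccontinuous (on_cyl1 b c).
Proof.
move=> cc x n; case: (eqVneq (x 0) b) => hx.
- have [N hN] := cc (shiftn 1 x) n.
  exists N.+1 => y hy; have hy0 : y 0 = b by rewrite hy.
  rewrite /on_cyl1 hx hy0 eqxx => -[|i] hi //; rewrite /cyl /= subn1 /=.
  apply: hN; last by lia.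
  by move=> j hj; rewrite /shiftn hy // addn1.
- exists n.+1 => y hy; have hy0 : y 0 = x 0 by apply: hy.
  by rewrite !on_cyl1_out ?hy0 // => i hi; apply: hy; lia.
Qed.

Lemma in_cyl_nil x : in_cyl [::] x.
Proof. by exists x; rewrite cyl_nil. Qed.

Lemma in_cyl_cons b w x : in_cyl (b :: w) x <-> x 0 = b /\ in_cyl w (shiftn 1 x).
Proof.
split => [[y ->] | [<- [y hy]]].
- by split; last by exists y; rewrite cyl_cons (shiftn_cyl [:: b]).
- by exists y; rewrite cyl_cons -hy -cyl_head_shiftn.
Qed.

Lemma is_partition_trivial : is_partition [:: [::]].
Proof. by move=> x; exists 0; split => [|[|k] []] //; split => //; apply: in_cyl_nil. Qed.

Lemma is_partition_split b ws ws' : is_partition ws -> is_partition ws' ->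
  is_partition (map (cons b) ws ++ map (cons (~~ b)) ws').
Proof.
move=> hws hws' x; set s := _ ++ _.
have size_s : size s = size ws + size ws' by rewrite size_cat !size_map.
have in_left k : k < size ws -> in_cyl (nth [::] s k) x <->
    x 0 = b /\ in_cyl (nth [::] ws k) (shiftn 1 x).
  by move=> hk; rewrite nth_cat size_map hk (nth_map [::]) // in_cyl_cons.
have in_right k : size ws <= k -> k < size s -> in_cyl (nth [::] s k) x <->
    x 0 = ~~ b /\ in_cyl (nth [::] ws' (k - size ws)) (shiftn 1 x).
  move=> hk1 hk2; rewrite nth_cat size_map ltnNge hk1 /= (nth_map [::]) ?in_cyl_cons //.
  by rewrite size_s in hk2; lia.
case: (boolP (x 0 == b)) => /eqP hx.
- have [k [[hk hin] uniq_k]] := hws (shiftn 1 x).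
  exists k; split; first by split; [rewrite size_s; lia | apply/in_left].
  move=> k' [hk' hin']; case: (ltnP k' (size ws)) => h.
    by apply: uniq_k; split => //; move/(in_left _ h): hin' => [].
  move/(in_right _ h hk'): hin' => [hb _].
  by case: (Bool.no_fixpoint_negb b); rewrite -hb.
- have [k [[hk hin] uniq_k]] := hws' (shiftn 1 x).
  have hk' : size ws + k < size s by rewrite size_s ltn_add2l.
  exists (size ws + k); split.
    split => //; apply/in_right; rewrite ?leq_addr ?addKn //.
    by split => //; move: (x 0) (b) hx => [] [].
  move=> k' [lt_k's hin']; case: (ltnP k' (size ws)) => h.
    by move/(in_left _ h): hin' => [].
  move/(in_right _ h lt_k's): hin' => [_ hin'].
  rewrite -[k'](subnKC h); congr addn; apply: uniq_k; split => //.
  by rewrite size_s in lt_k's; lia.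
Qed.

Lemma on_cyl1_V_data b c ms ms' : V_data c ms ms' ->
  V_data (on_cyl1 b c) (map (cons b) ms ++ [:: [:: ~~ b]]) (map (cons b) ms' ++ [:: [:: ~~ b]]).
Proof.
move=> [hs [hp [hp' hc]]]; split; first by rewrite !size_cat !size_map hs.
split; first exact: is_partition_split hp is_partition_trivial.
split; first exact: is_partition_split hp' is_partition_trivial.
move=> k; rewrite size_cat size_map /= => hk y; rewrite !nth_cat !size_map -hs.
case: ltnP => hk'.
  by rewrite !(nth_map [::]) -?hs // cyl_cons on_cyl1_cyl hc // -cyl_cons.
have -> : k - size ms = 0 by lia.
by rewrite on_cyl1_out //=; case: b.
Qed.

Lemma in_V_on_cyl1 b c : in_V c -> in_V (on_cyl1 b c).
Proof.
move=> [[c' [cK [c'K [cc cc']]]] [ms [ms' hd]]]; split.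
  exists (on_cyl1 b c'); do !split; by [apply: on_cyl1K | apply: on_cyl1_continuous].
by do 2 eexists; apply: on_cyl1_V_data hd.
Qed.

Lemma on_cyl_cyl r c y : on_cyl r c (cyl r y) = cyl r (c y).
Proof.
elim: r => [|b r IH] /=; first by rewrite !cyl_nil.
by rewrite cyl_cons on_cyl1_cyl IH -cyl_cons.
Qed.

Lemma in_V_on_cyl r c : in_V c -> in_V (on_cyl r c).
Proof. by move=> hc; elim: r => [|b r IH] //=; apply: in_V_on_cyl1. Qed.

Definition x0 (t : cantor) : cantor :=
  if t 0 then cyl [:: true; true] (shiftn 1 t)
  else if t 1 then cyl [:: true; false] (shiftn 2 t) else cyl [:: false] (shiftn 2 t).

Definition x0_inv (t : cantor) : cantor :=
  if ~~ t 0 then cyl [:: false; false] (shiftn 1 t)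
  else if t 1 then cyl [:: true] (shiftn 2 t) else cyl [:: false; true] (shiftn 2 t).

Lemma x0K : cancel x0 x0_inv.
Proof.
move=> t; apply: functional_extensionality => i; rewrite /x0 /x0_inv /cyl /shiftn /=.
case h0: (t 0); case h1: (t 1); case: i => [|[|i]] //=; (rewrite ifF; [congr t | ]); lia.
Qed.

Lemma x0_invK : cancel x0_inv x0.
Proof.
move=> t; apply: functional_extensionality => i; rewrite /x0 /x0_inv /cyl /shiftn /=.
case h0: (t 0); case h1: (t 1); case: i => [|[|i]] //=; (rewrite ifF; [congr t | ]); lia.
Qed.

Lemma x0_continuous : ccontinuous x0.
Proof.
move=> x n; exists n.+2 => y hy i hi; rewrite /x0 (hy 0) ?(hy 1) // /cyl /shiftn.
by case: (x 0); case: (x 1) => /=; case: ifP => // _; apply: hy; lia.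
Qed.

Lemma x0_inv_continuous : ccontinuous x0_inv.
Proof.
move=> x n; exists n.+2 => y hy i hi; rewrite /x0_inv (hy 0) ?(hy 1) // /cyl /shiftn.
by case: (x 0); case: (x 1) => /=; case: ifP => // _; apply: hy; lia.
Qed.

Lemma x0_V_data : V_data x0 [:: [:: false; false]; [:: false; true]; [:: true]]
  [:: [:: false]; [:: true; false]; [:: true; true]].
Proof.
split=> //; split.
  exact (is_partition_split false (is_partition_split false is_partition_trivial
    is_partition_trivial) is_partition_trivial).
split.
  exact (is_partition_split false is_partition_trivial (is_partition_split false
    is_partition_trivial is_partition_trivial)).
case=> [|[|[|k]]] //= _ y; apply: functional_extensionality => i.
all: rewrite /x0 /cyl /shiftn /=; case: i => [|[|i]] //=; try (rewrite ifF; last lia); congr y; lia.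
Qed.

Lemma in_V_x0 : in_V x0.
Proof.
split; last by do 2 eexists; apply: x0_V_data.
exists x0_inv; do !split; by [apply: x0K | apply: x0_invK | apply: x0_continuous | apply: x0_inv_continuous].
Qed.

Lemma exists_log_slope_one z : Q2 z -> exists g, in_V g /\ log_slope g z 1.
Proof.
move=> /Q2_cyl_zero [r ->]; exists (on_cyl r x0); split; first exact/in_V_on_cyl/in_V_x0.
exists (r ++ [:: false; false]), (r ++ [:: false]); split; last by rewrite !size_cat /=; lia.
split; rewrite ?cyl_cat ?(cyl_nseq_zero 2) ?(cyl_nseq_zero 1) // => y.
by rewrite !cyl_cat on_cyl_cyl (x0_V_data.2.2.2 0).
Qed.

Lemma conjugate_log_slope_mul phi psi g v x j d f : homeo_pair phi psi ->
  log_slope g x 1 -> log_slope (conjugate phi psi g) (phi x) j ->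
  is_homeo v -> log_slope v x d -> log_slope (conjugate phi psi v) (phi x) f -> f = (d * j)%Z.
Proof.
move=> [phiK [psiK [_ cpsi]]] hg hG [vi [vK _]].
have nonneg u e h : log_slope u x e -> (0 <= e)%Z ->
    log_slope (conjugate phi psi u) (phi x) h -> h = (e * j)%Z.
  move=> hu e_ge0 hh.
  have hgn := log_slope_iter (Z.to_nat e) hg; rewrite Z2Nat.id // Z.mul_1_r in hgn.
  have hGn := log_slope_iter (Z.to_nat e) hG; rewrite Z2Nat.id // iter_conjugate // in hGn.
  exact: germ_eq_log_slope (germ_eq_conjugate phiK cpsi (log_slope_germ_eq hu hgn)) hh hGn.
case: (Z.le_gt_cases 0 d) => d_ge0 hv hf; first exact: nonneg hv d_ge0 hf.
have conjK : cancel (conjugate phi psi v) (conjugate phi psi vi).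
  by move=> y; rewrite /conjugate phiK vK psiK.
have := nonneg _ _ _ (log_slope_inv hv vK) ltac:(lia) (log_slope_inv hf conjK).
by rewrite Z.mul_opp_l; lia.
Qed.

Lemma StabN_Q2_in_V_conjugate phi psi w : StabN_Q2 phi psi -> in_V w ->
  in_V (conjugate psi phi w).
Proof.
move=> [[phiK _] [_ [hV _]]] hw; have [v [hv ->]] := hV w hw.
suff -> : conjugate psi phi (fun y => phi (v (psi y))) = v by [].
by apply: functional_extensionality => y; rewrite /conjugate !phiK.
Qed.

Lemma StabN_Q2_log_slope phi psi v x d f : StabN_Q2 phi psi -> Q2 x -> in_V v ->
  log_slope v x d -> log_slope (conjugate phi psi v) (phi x) f -> f = d.
Proof.
move=> hS hx hv hd hf; case: (hS) => [hom [hconj [_ [hQ _]]]]; case: (hom) => [phiK [psiK _]].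
have [g [hg g1]] := exists_log_slope_one hx.
have [j hj] : exists j, log_slope (conjugate phi psi g) (phi x) j.
  apply: in_V_log_slope (hconj g hg) _ (hQ x hx).
  by rewrite /conjugate phiK (log_slope_fix g1).
have [h [hh h1]] := exists_log_slope_one (hQ x hx).
have hH := StabN_Q2_in_V_conjugate hS hh.
have [k hk] : exists k, log_slope (conjugate psi phi h) x k.
  by apply: in_V_log_slope hH _ hx; rewrite /conjugate (log_slope_fix h1) phiK.
have hH1 : log_slope (conjugate phi psi (conjugate psi phi h)) (phi x) 1.
  suff -> : conjugate phi psi (conjugate psi phi h) = h by [].
  by apply: functional_extensionality => y; rewrite /conjugate !psiK.
have j_gt0 := conjugate_log_slope_pos hom g1 Z.lt_0_1 hj.
have kj1 := conjugate_log_slope_mul hom g1 hj hH.1 hk hH1.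
have -> := conjugate_log_slope_mul hom g1 hj hv.1 hd hf.
have [_ ->] := Z.eq_mul_1_nonneg' k j (Z.lt_le_incl _ _ j_gt0) (esym kj1).
by rewrite Z.mul_1_r.
Qed.

Theorem mainTheorem6 (x : cantor) (v phi psi : cantor -> cantor) :
  Q2 x -> in_V v -> v x = x -> StabN_Q2 phi psi ->
  slope (fun y => phi (v (psi y))) (phi x) = slope v x.
Proof.
move=> hx hv vx hS; case: (hS) => [[phiK _] [hconj [_ [hQ _]]]].
have [d hd] := in_V_log_slope hv vx hx.
have hw : in_V (conjugate phi psi v) := hconj v hv.
have [f hf] : exists f, log_slope (conjugate phi psi v) (phi x) f.
  by apply: in_V_log_slope hw _ (hQ x hx); rewrite /conjugate phiK vx.
by rewrite (slope_log_slope hw hf) (slope_log_slope hv hd) (StabN_Q2_log_slope hS hx hv hd hf).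
Qed.
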